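(* Let $\mathcal D_{\mathrm{cost}}$ be a distribution on $\mathbb R_{\ge0}$ with mean $1$, let $n\ge1$, and let $x_1,\dots,x_n$ be i.i.d. from $\mathcal D_{\mathrm{cost}}$. Let $\Delta(x_1,\dots,x_n)$ be the minimum number of the $x_i$ that must be removed so that the sum of the remaining ones is at most $n$. Then $$\mathbb E[\Delta(x_1,\dots,x_n)]\le5\sqrt n.$$ *)

From HB Require Import structures.
From mathcomp Require Import all_boot all_order all_algebra.
From mathcomp Require Import all_classical all_reals all_analysis.
Set Implicit Arguments. Unset Strict Implicit. Unset Printing Implicit Defensive.
Import Order.TTheory GRing.Theory Num.Theory.
Local Open Scope classical_set_scope.
Local Open Scope ring_scope.

(* Removing everything always works,
   so the minimum is over a nonempty family (default value n is harmless). *)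
Definition Delta (R : realType) (n : nat) (x : 'I_n -> R) : nat :=
  \big[minn/n]_(S : {set 'I_n} | \sum_(i in ~: S) x i <= n%:R) #|S|.

Definition iid (R : realType) (d : measure_display) (T : measurableType d)
  (P : probability T R) (mu : probability R R) (n : nat)
  (X : 'I_n -> {RV P >-> R}) : Prop :=
  (forall i (B : set R), measurable B -> P (X i @^-1` B) = mu B) /\
  (forall B : 'I_n -> set R, (forall i, measurable (B i)) ->
     P (\bigcap_(i in [set: 'I_n]) (X i @^-1` B i)) =
     (\prod_(i < n) P (X i @^-1` B i))%E).

(* If [Delta x = k.+1], a set of [k] largest coordinates is not enough to remove, so
   the other coordinates sum to more than [n]; with [tau] the largest of them,
   [sum_i min(x_i^+, tau) > k tau + n].  Comparing with the scale [s = 4^(j+1)] just above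
   [tau] gives [k < 4 (Y_s - n)^+ / s] for [Y_s = sum_i min(x_i^+, s)], so summing over
   the scales [j < J] (plus a tail term for [tau > 4^J]) bounds [Delta] pointwise.
   [Y_s] is a sum of [n] iid variables in [[0, s]] with mean [E Y_s <= n], hence
   [Var Y_s <= n s], and AM-GM [4 (Y_s - n)^+ / s <= 2 (Y_s - E Y_s)^2 / (s c) + 2 c / s]
   with [c = 2^(j+1) sqrt n] makes scale [j] cost at most [4 sqrt n / 2^(j+1)] in
   expectation.  Summing over [J = n] scales: [E Delta <= 1 + 4 sqrt n + n / 4^n <= 5 sqrt n]. *)

From HB Require Import structures.
From mathcomp Require Import all_boot all_order all_algebra.
From mathcomp Require Import all_classical all_reals all_analysis.
From mathcomp Require Import lra ring measurable_realfun.
Set Implicit Arguments.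
Unset Strict Implicit.
Unset Printing Implicit Defensive.

Import Order.TTheory GRing.Theory Num.Theory.
Local Open Scope ring_scope.

Definition clip {R : realDomainType} (s y : R) : R := Num.min (Num.max y 0) s.

Section Clip.
Variable R : realDomainType.
Implicit Types s y : R.

Lemma clip_ge0 s y : 0 <= s -> 0 <= clip s y.
Proof. by move=> s0; rewrite /clip le_min le_max lexx orbT s0. Qed.

Lemma clip_le s y : clip s y <= s.
Proof. by rewrite /clip ge_min lexx orbT. Qed.

Lemma clip_le_maxr0 s y : clip s y <= Num.max y 0.
Proof. by rewrite /clip ge_min lexx. Qed.

Lemma ler_clip s1 s2 y : s1 <= s2 -> clip s1 y <= clip s2 y.
Proof. by move=> le_s; rewrite /clip le_min2. Qed.

End Clip.

Lemma exists_card_set (T : finType) m : (m <= #|T|)%N -> exists S : {set T}, #|S| = m.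
Proof.
elim: m => [|m IH] lemT; first by exists finset.set0; rewrite cards0.
have [S cS] := IH (ltnW lemT).
have : (0 < #|~: S|)%N by rewrite cardsCs finset.setCK cS subn_gt0.
case/card_gt0P => j; rewrite finset.in_setC => jS.
by exists (j |: S); rewrite cardsU1 jS cS.
Qed.

Lemma exists_pow_bracket (R : realDomainType) (b tau : R) J : 1 < tau -> tau <= b ^+ J ->
  exists j : 'I_J, b ^+ j < tau <= b ^+ j.+1.
Proof.
elim: J => [|J IH] t1 tJ; first by move: tJ; rewrite expr0 leNgt t1.
have [tJ'|tJ'] := leP tau (b ^+ J).
  by have [j Hj] := IH t1 tJ'; exists (widen_ord (leqnSn J) j).
by exists ord_max; rewrite /= tJ' tJ.
Qed.

Lemma maxr0_mul_le_sqrD (R : realDomainType) (G W c : R) :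
  0 <= c -> G <= W -> 2 * c * Num.max G 0 <= W ^+ 2 + c ^+ 2.
Proof.
move=> c0 GW; have [G0|G0] := leP G 0; first by rewrite mulr0 addr_ge0 ?sqr_ge0.
have := sqr_ge0 (W - c); nra.
Qed.

Section Delta.
Variables (R : realType) (n : nat) (x : 'I_n -> R).

Lemma Delta_le (S : {set 'I_n}) : \sum_(i in ~: S) x i <= n%:R -> (Delta x <= #|S|)%N.
Proof. exact: (@bigmin_le_cond _ nat _ n S _ (fun S => #|S|)). Qed.

Lemma Delta_le_n : (Delta x <= n)%N.
Proof.
rewrite -[n in (_ <= n)%N]card_ord -cardsT; apply: Delta_le.
by rewrite finset.setCT big_set0.
Qed.

Lemma exists_top_set k : (k <= n)%N -> exists2 S : {set 'I_n}, #|S| = k &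
  forall i j, i \in S -> j \notin S -> x j <= x i.
Proof.
rewrite -[n in (_ <= n)%N]card_ord => /exists_card_set[S0 cS0].
pose sumS (S : {set 'I_n}) := \sum_(i in S) x i.
have PS0 : S0 \in [pred S : {set 'I_n} | #|S| == k] by rewrite inE /= cS0.
case: (@arg_maxP _ R _ S0 _ sumS PS0) => S /eqP cS Smax.
exists S => // i j iS jS; rewrite leNgt; apply/negP => lt_ij.
have cSij : #|j |: (S :\ i)| == k.
  by rewrite cardsU1 in_setD1 (negbTE jS) andbF -cS (cardsD1 i S) iS.
have := Smax _ cSij; rewrite /sumS big_setU1 /=; last by rewrite in_setD1 (negbTE jS) andbF.
by rewrite (big_setD1 i iS) /= lerD2r leNgt lt_ij.
Qed.

Lemma Delta_succ_clip k : Delta x = k.+1 ->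
  exists2 tau, 0 < tau & k%:R * tau + n%:R < \sum_i clip tau (x i).
Proof.
move=> Dk.
have kn : (k < n)%N by rewrite -Dk Delta_le_n.
have [S cS Stop] := exists_top_set (ltnW kn).
have rest : n%:R < \sum_(i in ~: S) x i.
  by rewrite ltNge; apply/negP => /Delta_le; rewrite Dk cS ltnn.
have : (0 < #|~: S|)%N by rewrite cardsCs finset.setCK cS card_ord subn_gt0.
case/card_gt0P => j1 j1S.
case: (@arg_maxP _ R _ j1 (mem (~: S)) x j1S) => j0 j0S j0max.
set tau := x j0.
have tau0 : 0 < tau.
  rewrite ltNge; apply: contraTN rest => tau_le0; rewrite -leNgt.
  apply: le_trans (ler0n _ n); apply: sumr_le0 => i iS.
  exact: le_trans (j0max i iS) tau_le0.
exists tau => //; rewrite (bigID (mem S)) /=.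
have -> : \sum_(i in S) clip tau (x i) = k%:R * tau.
  rewrite (eq_bigr (fun=> tau)) => [|i iS]; first by rewrite sumr_const cS mulr_natl.
  by apply/min_idPr; rewrite le_max Stop // -finset.in_setC.
rewrite ltrD2l (lt_le_trans rest) //.
rewrite [leRHS](eq_bigl (mem (~: S))) => [|i]; last by rewrite !inE.
by apply: ler_sum => i iS; rewrite le_min le_max lexx; exact: j0max.
Qed.

Definition scale_term s := 4 * Num.max (\sum_i clip s (x i) - n%:R) 0 / s.

Definition scale_bound J :=
  \sum_(j < J) scale_term (4 ^+ j.+1) + (\sum_i Num.max (x i) 0) / 4 ^+ J.

Lemma scale_term_ge0 s : 0 < s -> 0 <= scale_term s.
Proof. by move=> s0; rewrite divr_ge0 ?mulr_ge0 ?le_max ?lexx ?orbT ?ltW. Qed.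

Lemma tail_term_ge0 J : 0 <= (\sum_i Num.max (x i) 0) / 4 ^+ J.
Proof.
by rewrite divr_ge0 ?exprn_ge0 // sumr_ge0 // => i _; rewrite le_max lexx orbT.
Qed.

Lemma scale_bound_ge0 J : 0 <= scale_bound J.
Proof.
by rewrite addr_ge0 ?tail_term_ge0 // sumr_ge0 // => j _; rewrite scale_term_ge0 ?exprn_gt0.
Qed.

(* Compare with the scale [4 ^+ j.+1], the first power of [4] at or above [tau]; the
   hypothesis fails for [tau <= 1], and the tail term takes over when [4 ^+ J < tau]. *)
Lemma scale_bound_gt k tau J : 0 < tau -> k%:R * tau + n%:R < \sum_i clip tau (x i) ->
  k%:R < scale_bound J.
Proof.
move=> tau0 lt_k.
have k0 : 0 <= k%:R :> R by [].
have n0 : 0 <= n%:R :> R by [].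
have pos4 m : 0 < (4 : R) ^+ m by apply: exprn_gt0.
have [tau1|tau1] := leP tau 1.
  have : \sum_i clip tau (x i) <= n%:R.
    rewrite -[n in n%:R]card_ord -sumr_const; apply: ler_sum => i _.
    exact: le_trans (clip_le _ _) tau1.
  have := mulr_ge0 k0 (ltW tau0).
  lra.
have [tauJ|tauJ] := leP tau (4 ^+ J); last first.
  apply: lt_le_trans (_ : _ < (\sum_i Num.max (x i) 0) / 4 ^+ J) _.
    rewrite ltr_pdivlMr //.
    have : \sum_i clip tau (x i) <= \sum_i Num.max (x i) 0.
      by apply: ler_sum => i _; apply: clip_le_maxr0.
    have : k%:R * 4 ^+ J <= k%:R * tau by apply: ler_wpM2l => //; apply: ltW.
    lra.
  by rewrite lerDr sumr_ge0 // => j _; rewrite scale_term_ge0.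
have [j /andP[lo_j hi_j]] := exists_pow_bracket tau1 tauJ.
apply: lt_le_trans (_ : _ < scale_term (4 ^+ j.+1)) _; last first.
  rewrite -[leLHS]addr0 lerD ?tail_term_ge0 // (bigD1 j) //= lerDl.
  by rewrite sumr_ge0 // => i _; rewrite scale_term_ge0.
rewrite ltr_pdivlMr // [in X in X < _]exprS.
have : \sum_i clip tau (x i) <= \sum_i clip (4 ^+ j.+1) (x i).
  by apply: ler_sum => i _; apply: ler_clip.
have : k%:R * 4 ^+ j <= k%:R * tau by apply: ler_wpM2l => //; apply: ltW.
have : \sum_i clip (4 ^+ j.+1) (x i) - n%:R <=
    Num.max (\sum_i clip (4 ^+ j.+1) (x i) - n%:R) 0 by rewrite le_max lexx.
lra.
Qed.

Lemma scale_term_le_sqr (s c m : R) : 0 < s -> 0 < c -> m <= 1 ->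
  scale_term s <= 2 / (s * c) * (\sum_i clip s (x i) - n%:R * m) ^+ 2 + 2 * c / s.
Proof.
move=> s0 c0 m1.
have le_W : \sum_i clip s (x i) - n%:R <= \sum_i clip s (x i) - n%:R * m.
  by rewrite lerD2l lerN2 ler_piMr.
have [s0' c0'] := (gt_eqF s0, gt_eqF c0).
have -> : scale_term s =
    2 / (s * c) * (2 * c * Num.max (\sum_i clip s (x i) - n%:R) 0).
  by rewrite /scale_term; field; rewrite s0' c0'.
rewrite [X in _ <= X](_ : _ = 2 / (s * c) * ((\sum_i clip s (x i) - n%:R * m) ^+ 2 + c ^+ 2)).
  apply: ler_wpM2l; last exact: maxr0_mul_le_sqrD (ltW c0) le_W.
  by rewrite divr_ge0 ?mulr_ge0 ?ltW.
by field; rewrite s0' c0'.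
Qed.

Lemma Delta_le_scale_bound J : (Delta x)%:R <= 1 + scale_bound J.
Proof.
case Dk: (Delta x) => [|k]; first by rewrite addr_ge0 ?scale_bound_ge0.
have [tau tau0 lt_k] := Delta_succ_clip Dk.
by rewrite -natr1 addrC lerD2l ltW // (scale_bound_gt _ tau0 lt_k).
Qed.

End Delta.

Local Open Scope classical_set_scope.
Local Open Scope ring_scope.

Section Integral.
Context {d : measure_display} {T : measurableType d} {R : realType}.

Lemma ge0_le_integral_nomeas (mu : {measure set T -> \bar R}) (f g : T -> \bar R) :
  (forall x, 0 <= f x)%E -> (forall x, f x <= g x)%E ->
  (\int[mu]_x f x <= \int[mu]_x g x)%E.
Proof.
move=> f0 fg; have g0 x : (0 <= g x)%E by apply: le_trans (fg x).
rewrite !ge0_integralTE //; apply: ereal_sup_le => _ [h hf <-].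
by exists h => //= x; apply: le_trans (hf x) (fg x).
Qed.

Lemma integral_cst_probability (P : probability T R) (c : R) : (\int[P]_x c%:E = c%:E)%E.
Proof.
by rewrite integral_cst // -[RHS]mule1; congr (_ * _)%E; exact: probability_setT.
Qed.

Lemma ge0_integralD_EFin (mu : {measure set T -> \bar R}) (f g : T -> R) :
  measurable_fun setT f -> measurable_fun setT g ->
  (forall x, 0 <= f x) -> (forall x, 0 <= g x) ->
  (\int[mu]_x (f x + g x)%:E = \int[mu]_x (f x)%:E + \int[mu]_x (g x)%:E)%E.
Proof.
move=> mf mg f0 g0; under eq_integral do rewrite EFinD.
rewrite ge0_integralD //; by [move=> x _; rewrite lee_fin ?f0 ?g0 | apply/measurable_EFinP].
Qed.

Lemma ge0_integral_sum_EFin (mu : {measure set T -> \bar R}) (I : Type) (r : seq I)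
    (f : I -> T -> R) :
  (forall i, measurable_fun setT (f i)) -> (forall i x, 0 <= f i x) ->
  (\int[mu]_x (\sum_(i <- r) f i x)%:E = \sum_(i <- r) \int[mu]_x (f i x)%:E)%E.
Proof.
move=> mf f0; under eq_integral do rewrite -sumEFin.
rewrite ge0_integral_sum //; by [move=> i x _; rewrite lee_fin f0 | move=> i; apply/measurable_EFinP].
Qed.

Lemma ge0_integral_sqr_centered (P : probability T R) (Y : T -> R) (c v : R) :
  measurable_fun setT Y -> (forall x, 0 <= Y x) ->
  (\int[P]_x (Y x)%:E = c%:E)%E -> (\int[P]_x (Y x ^+ 2)%:E <= v%:E)%E ->
  (\int[P]_x ((Y x - c) ^+ 2)%:E <= (v - c ^+ 2)%:E)%E.
Proof.
move=> mY Y0 EY EY2.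
have c0 : 0 <= c by rewrite -lee_fin -EY integral_ge0 // => x _; rewrite lee_fin.
have mcY : measurable_fun setT (fun x => 2 * c * Y x) by apply: measurable_funM.
have E2cY : (\int[P]_x (2 * c * Y x)%:E = (2 * c * c)%:E)%E.
  under eq_integral do rewrite EFinM.
  rewrite ge0_integralZl_EFin ?mulr_ge0 ?EY //.
  - by move=> x _; rewrite lee_fin.
  - exact/measurable_EFinP.
(* Integrating [(Y - c)^2 + 2 c Y = Y^2 + c^2] keeps every integrand nonnegative. *)
have split_sqr : (\int[P]_x ((Y x - c) ^+ 2)%:E + (2 * c * c)%:E =
                  \int[P]_x (Y x ^+ 2)%:E + (c ^+ 2)%:E)%E.
  rewrite -E2cY -ge0_integralD_EFin //; last 3 first.
  - by apply: measurable_funX; apply: measurable_funB.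
  - by move=> x; rewrite sqr_ge0.
  - by move=> x; rewrite !mulr_ge0.
  rewrite -(integral_cst_probability P) -ge0_integralD_EFin //; last 3 first.
  - exact: measurable_funX.
  - by move=> x; rewrite sqr_ge0.
  - by move=> _; rewrite sqr_ge0.
  by apply: eq_integral => x _; congr EFin; ring.
rewrite -(@leeD2rE _ (2 * c * c)%:E) // split_sqr -EFinD.
by apply: le_trans (leeD2r _ EY2) _; rewrite -EFinD lee_fin; lra.
Qed.

End Integral.

Section Iid.
Variables (R : realType) (d : measure_display) (T : measurableType d)
  (P : probability T R) (mu : probability R R) (n : nat) (X : 'I_n -> {RV P >-> R}).
Hypothesis iidX : @iid R d T P mu n X.

Lemma ge0_integral_iid (i : 'I_n) (f : R -> R) :
  measurable_fun setT f -> (forall y, 0 <= f y) ->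
  (\int[P]_w (f (X i w))%:E = \int[mu]_y (f y)%:E)%E.
Proof.
move=> mf f0.
rewrite -(@ge0_integral_distribution _ _ _ _ _ P (X i) (fun y => (f y)%:E)) //; last first.
  exact/measurable_EFinP.
by apply: eq_measure_integral => A mA _; apply: iidX.1.
Qed.

Lemma iid_setI (i k : 'I_n) (B C : set R) : i != k -> measurable B -> measurable C ->
  P (X i @^-1` B `&` X k @^-1` C) = (mu B * mu C)%E.
Proof.
move=> ik mB mC.
pose Bf l := if l == i then B else if l == k then C else setT.
have mBf l : measurable (Bf l) by rewrite /Bf; case: ifP => _ //; case: ifP.
have -> : X i @^-1` B `&` X k @^-1` C = \bigcap_(l in [set: 'I_n]) X l @^-1` Bf l.
  apply/seteqP; split => [w [wB wC] l _|w wBf]; last split.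
  - by rewrite /Bf; case: ifP => [/eqP->//|_]; case: ifP => [/eqP->//|].
  - by have := wBf i Logic.I; rewrite /Bf eqxx.
  - by have := wBf k Logic.I; rewrite /Bf eqxx eq_sym (negbTE ik).
rewrite (iidX.2 Bf mBf) (bigD1 i) //= (bigD1 k) 1?eq_sym //= big1 => [|l /andP[li lk]].
  by rewrite mule1 /Bf eqxx eq_sym (negbTE ik) eqxx !iidX.1.
by rewrite /Bf (negbTE li) (negbTE lk) preimage_setT probability_setT.
Qed.

(* Independence identifies the law of [(X i, X k)] with [mu \x mu]; then Tonelli. *)
Lemma ge0_integral_iid_mul (i k : 'I_n) (f g : R -> R) : i != k ->
  measurable_fun setT f -> measurable_fun setT g ->
  (forall y, 0 <= f y) -> (forall y, 0 <= g y) ->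
  (\int[P]_w (f (X i w) * g (X k w))%:E =
   \int[mu]_y (f y)%:E * \int[mu]_y (g y)%:E)%E.
Proof.
move=> ik mf mg f0 g0.
have mXik : measurable_fun setT (fun w => (X i w, X k w)) by apply: measurable_fun_pair.
pose Y : {RV P >-> (R * R)%type} :=
  HB.pack (fun w => (X i w, X k w)) (isMeasurableFun.Build _ _ _ _ _ mXik).
pose h (z : R * R) := (f z.1 * g z.2)%:E.
have mh : measurable_fun setT h.
  apply/measurable_EFinP; apply: measurable_funM.
    exact: measurableT_comp mf measurable_fst.
  exact: measurableT_comp mg measurable_snd.
have h0 z : (0 <= h z)%E by rewrite lee_fin mulr_ge0.
change (\int[P]_w (h \o Y) w = \int[mu]_y (f y)%:E * \int[mu]_y (g y)%:E)%E.
rewrite -ge0_integral_distribution // (eq_measure_integral (mu \x mu)%E); last first.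
  move=> A mA _; apply/esym; apply: product_measure_unique => // B C mB mC.
  exact: iid_setI.
rewrite fubini_tonelli1 // /fubini_F /h /=.
have inner y : (\int[mu]_z (f y * g z)%:E = (f y)%:E * \int[mu]_z (g z)%:E)%E.
  rewrite -ge0_integralZl_EFin //; last exact/measurable_EFinP.
  by move=> z _; rewrite lee_fin.
under eq_integral do rewrite inner.
rewrite ge0_integralZr //; [exact/measurable_EFinP|by move=> y _; rewrite lee_fin|].
by apply: integral_ge0 => y _; rewrite lee_fin.
Qed.

End Iid.

Lemma integral_maxr0E (R : realType) (mu : {measure set R -> \bar R}) :
  mu [set x : R | x < 0] = 0%E ->
  (\int[mu]_x (Num.max x 0)%:E = \int[mu]_x x%:E)%E.
Proof.
move=> neg0.
have mneg : measurable [set x : R | x < 0].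
  rewrite (_ : [set x : R | x < 0] = `]-oo, 0[%classic); first exact: measurable_itv.
  by apply/seteqP; split => x /=; rewrite in_itv.
have Eneg : (\int[mu]_x ((fun x : R => x%:E)^\- x) = 0)%E.
  rewrite (ge0_negligible_integral _ _ _ _ neg0) //; last first.
    by apply: measurable_funeneg; apply/measurable_EFinP.
  rewrite (eq_integral (cst 0%E)) ?integral0 // => x; rewrite inE /= => -[_ /negP].
  by rewrite -leNgt funenegE => x0; apply/max_idPr; rewrite lee_fin oppr_le0.
rewrite [RHS]integralE Eneg sube0.
by apply: eq_integral => x _; rewrite funeposE EFin_max.
Qed.

Section ClipMean.
Variables (R : realType) (mu : probability R R).

Lemma measurable_clip (s : R) : measurable_fun setT (clip s).
Proof. by apply: measurable_minr => //; apply: measurable_maxr. Qed.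

Definition clip_mean (s : R) := fine (\int[mu]_y (clip s y)%:E).

Lemma integral_clip_le (s : R) : 0 <= s -> (\int[mu]_y (clip s y)%:E <= s%:E)%E.
Proof.
move=> s0; rewrite -(integral_cst_probability mu) ge0_le_integral //.
- by move=> y _; rewrite lee_fin clip_ge0.
- by apply/measurable_EFinP; apply: measurable_clip.
- by move=> y _; rewrite lee_fin clip_le.
Qed.

Lemma clip_meanE (s : R) : 0 <= s -> (\int[mu]_y (clip s y)%:E = (clip_mean s)%:E)%E.
Proof.
move=> s0; rewrite fineK // ge0_fin_numE ?integral_ge0 // => [|y _]; last first.
  by rewrite lee_fin clip_ge0.
exact: le_lt_trans (integral_clip_le s0) (ltry _).
Qed.

Lemma clip_mean_ge0 (s : R) : 0 <= s -> 0 <= clip_mean s.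
Proof.
move=> s0; rewrite -lee_fin -clip_meanE // integral_ge0 // => y _.
by rewrite lee_fin clip_ge0.
Qed.

Lemma integral_clip_sqr_le (s : R) : 0 <= s ->
  (\int[mu]_y (clip s y * clip s y)%:E <= (s * clip_mean s)%:E)%E.
Proof.
move=> s0; have clip0 y : 0 <= clip s y by apply: clip_ge0.
rewrite EFinM -clip_meanE // -ge0_integralZl_EFin //; last 2 first.
- by move=> y _; rewrite lee_fin.
- by apply/measurable_EFinP; apply: measurable_clip.
apply: ge0_le_integral => //.
- by move=> y _; rewrite lee_fin mulr_ge0.
- by apply/measurable_EFinP; apply: measurable_funM; apply: measurable_clip.
- by apply/measurable_EFinP; apply: measurable_funM => //; apply: measurable_clip.
- by move=> y _; rewrite lee_fin ler_wpM2r ?clip_le.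
Qed.

Lemma clip_mean_le1 (s : R) :
  mu [set x : R | x < 0] = 0%E -> (\int[mu]_x x%:E = 1)%E -> 0 <= s ->
  clip_mean s <= 1.
Proof.
move=> neg0 mean1 s0; rewrite -lee_fin -clip_meanE // -mean1 -integral_maxr0E //.
rewrite ge0_le_integral //.
- by move=> y _; rewrite lee_fin clip_ge0.
- by apply/measurable_EFinP; apply: measurable_clip.
- by apply/measurable_EFinP; apply: measurable_maxr.
- by move=> y _; rewrite lee_fin clip_le_maxr0.
Qed.

End ClipMean.

Section ClipSum.
Variables (R : realType) (d : measure_display) (T : measurableType d)
  (P : probability T R) (mu : probability R R) (n : nat) (X : 'I_n -> {RV P >-> R}).
Hypothesis iidX : @iid R d T P mu n X.
Variable s : R.
Hypothesis s0 : 0 <= s.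

Let m := clip_mean mu s.
Let Y w := \sum_i clip s (X i w).
Let clipX_ge0 i w : 0 <= clip s (X i w). Proof. exact: clip_ge0. Qed.

Lemma measurable_clipX i : measurable_fun setT (fun w => clip s (X i w)).
Proof. exact: measurableT_comp (measurable_clip s) (measurable_funPT (X i)). Qed.

Lemma measurable_clip_sum : measurable_fun setT Y.
Proof. by apply: measurable_sum => i; apply: measurable_clipX. Qed.

Lemma integral_clip_sum : (\int[P]_w (Y w)%:E = (n%:R * m)%:E)%E.
Proof.
rewrite (ge0_integral_sum_EFin _ _ measurable_clipX clipX_ge0).
have EX i : (\int[P]_w (clip s (X i w))%:E = m%:E)%E.
  rewrite (ge0_integral_iid iidX _ (measurable_clip s)) ?clip_meanE // => y.
  exact: clip_ge0.
under eq_bigr do rewrite EX.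
by rewrite sumEFin sumr_const card_ord mulr_natl.
Qed.

Lemma integral_clip_mul_le i k :
  (\int[P]_w (clip s (X i w) * clip s (X k w))%:E <=
   (m * m + if i == k then s * m else 0)%:E)%E.
Proof.
have clip0 y : 0 <= clip s y by apply: clip_ge0.
have [<-|ik] := eqVneq i k; last first.
  rewrite (ge0_integral_iid_mul iidX) ?clip_meanE //; try exact: measurable_clip.
  by rewrite addr0 -EFinM.
have mclip2 : measurable_fun setT (fun y => clip s y * clip s y).
  by apply: measurable_funM; apply: measurable_clip.
rewrite (ge0_integral_iid iidX _ mclip2) => [|y]; last exact: mulr_ge0.
apply: le_trans (integral_clip_sqr_le mu s0) _.
by rewrite lee_fin lerDr mulr_ge0 // clip_mean_ge0.
Qed.

Lemma integral_clip_sum_sqr_le :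
  (\int[P]_w (Y w ^+ 2)%:E <= (n%:R * (n%:R * (m * m) + s * m))%:E)%E.
Proof.
have mclip2 i k : measurable_fun setT (fun w => clip s (X i w) * clip s (X k w)).
  by apply: measurable_funM; apply: measurable_clipX.
have clip2_ge0 i k w : 0 <= clip s (X i w) * clip s (X k w) by rewrite mulr_ge0.
under eq_integral do rewrite expr2 big_distrlr /=.
rewrite ge0_integral_sum_EFin => [|i|i w]; last 2 first.
- by apply: measurable_sum => k; apply: mclip2.
- by apply: sumr_ge0 => k _; apply: clip2_ge0.
apply: le_trans (_ : _ <= \sum_i \sum_k (m * m + if i == k then s * m else 0)%:E)%E _.
  apply: lee_sum => i _; rewrite (ge0_integral_sum_EFin _ _ (mclip2 i) (clip2_ge0 i)).
  by apply: lee_sum => k _; apply: integral_clip_mul_le.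
have row i : \sum_(k < n) (m * m + if i == k then s * m else 0) = n%:R * (m * m) + s * m.
  rewrite big_split /= sumr_const card_ord mulr_natl (bigD1 i) //= eqxx big1 ?addr0 //.
  by move=> k; rewrite eq_sym => /negbTE ->.
under eq_bigr do rewrite sumEFin row.
by rewrite sumEFin sumr_const card_ord lee_fin [in leRHS]mulr_natl.
Qed.

Lemma clip_sum_variance_le :
  (\int[P]_w ((Y w - n%:R * m) ^+ 2)%:E <= (n%:R * s * m)%:E)%E.
Proof.
apply: le_trans (ge0_integral_sqr_centered _ _ integral_clip_sum integral_clip_sum_sqr_le) _.
- exact: measurable_clip_sum.
- by move=> w; apply: sumr_ge0.
by rewrite lee_fin; lra.
Qed.

End ClipSum.

Section ExpectedDelta.
Variables (R : realType) (d : measure_display) (T : measurableType d)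
  (P : probability T R) (mu : probability R R) (n : nat) (X : 'I_n -> {RV P >-> R}).
Hypotheses (neg0 : mu [set x : R | x < 0] = 0%E) (mean1 : (\int[mu]_x x%:E = 1)%E)
  (iidX : @iid R d T P mu n X).
Variables (J : nat) (c : nat -> R).
Hypothesis c_gt0 : forall j, 0 < c j.

Let s j : R := 4 ^+ j.+1.
Let W j w := \sum_i clip (s j) (X i w) - n%:R * clip_mean mu (s j).

Let s_gt0 j : 0 < s j. Proof. exact: exprn_gt0. Qed.

Lemma Delta_le_quadratic w :
  (Delta (fun i => X i w))%:R <= (1 + \sum_(j < J) 2 * c j / s j) +
    \sum_(j < J) 2 / (s j * c j) * W j w ^+ 2 + \sum_i Num.max (X i w) 0 / 4 ^+ J.
Proof.
apply: le_trans (Delta_le_scale_bound _ J) _.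
rewrite /scale_bound mulr_suml addrA lerD2r -addrA lerD2l -big_split /=.
apply: ler_sum => j _; rewrite addrC.
by apply: scale_term_le_sqr => //; rewrite clip_mean_le1 // ltW.
Qed.

Lemma integral_quadratic_term j :
  (\int[P]_w (2 / (s j * c j) * W j w ^+ 2)%:E <= (2 * n%:R / c j)%:E)%E.
Proof.
have s0 := ltW (s_gt0 j); have m1 := clip_mean_le1 neg0 mean1 s0.
have sc0 : 0 <= 2 / (s j * c j) by rewrite divr_ge0 // mulr_ge0 // ltW.
under eq_integral do rewrite EFinM.
rewrite ge0_integralZl_EFin //; last 2 first.
- by move=> w _; rewrite lee_fin sqr_ge0.
- by apply/measurable_EFinP/measurable_funX/measurable_funB => //; apply: measurable_clip_sum.
apply: le_trans (lee_wpmul2l _ (clip_sum_variance_le iidX s0)) _; first by rewrite lee_fin.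
rewrite -EFinM lee_fin (_ : 2 / (s j * c j) * (n%:R * s j * clip_mean mu (s j)) =
                           2 * n%:R / c j * clip_mean mu (s j)).
  by rewrite ler_piMr // divr_ge0 // ltW.
by field; rewrite !gt_eqF.
Qed.

Lemma integral_tail_term i :
  (\int[P]_w (Num.max (X i w) 0 / 4 ^+ J)%:E = (4 ^+ J)^-1%:E)%E.
Proof.
have mmax : measurable_fun setT (fun y : R => Num.max y 0) by apply: measurable_maxr.
have max0 (y : R) : 0 <= Num.max y 0 by rewrite le_max lexx orbT.
under eq_integral do rewrite EFinM.
rewrite ge0_integralZr //; last 2 first.
- exact/measurable_EFinP/(measurableT_comp mmax).
- by move=> w _; rewrite lee_fin.
by rewrite (ge0_integral_iid iidX i mmax max0) integral_maxr0E // mean1 mul1e.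
Qed.

Lemma integral_Delta_le :
  (\int[P]_w ((Delta (fun i => X i w))%:R)%:E <=
   (1 + \sum_(j < J) (2 * c j / s j + 2 * n%:R / c j) + n%:R / 4 ^+ J)%:E)%E.
Proof.
pose A := 1 + \sum_(j < J) 2 * c j / s j.
pose Q w := \sum_(j < J) 2 / (s j * c j) * W j w ^+ 2.
pose Tl w := \sum_i Num.max (X i w) 0 / 4 ^+ J.
have A0 : 0 <= A by rewrite addr_ge0 // sumr_ge0 // => j _; rewrite divr_ge0 ?mulr_ge0 ?ltW.
have mQj (j : 'I_J) : measurable_fun setT (fun w => 2 / (s j * c j) * W j w ^+ 2).
  by apply/measurable_funM/measurable_funX/measurable_funB => //; apply: measurable_clip_sum.
have Qj0 (j : 'I_J) w : 0 <= 2 / (s j * c j) * W j w ^+ 2.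
  by rewrite mulr_ge0 ?sqr_ge0 ?divr_ge0 ?mulr_ge0 ?ltW.
have mTli (i : 'I_n) : measurable_fun setT (fun w => Num.max (X i w) 0 / 4 ^+ J).
  by apply: measurable_funM => //; apply: measurable_maxr => //; apply: measurable_funPT.
have Tli0 (i : 'I_n) w : 0 <= Num.max (X i w) 0 / 4 ^+ J.
  by rewrite divr_ge0 ?exprn_ge0 // le_max lexx orbT.
have mQ : measurable_fun setT Q by apply: measurable_sum.
have mTl : measurable_fun setT Tl by apply: measurable_sum.
have Q0 w : 0 <= Q w by apply: sumr_ge0.
have Tl0 w : 0 <= Tl w by apply: sumr_ge0.
apply: le_trans (_ : _ <= \int[P]_w (A + Q w + Tl w)%:E)%E _.
  by apply: ge0_le_integral_nomeas => w; rewrite lee_fin // Delta_le_quadratic.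
rewrite (ge0_integralD_EFin _ (measurable_funD (measurable_cst A) mQ) mTl _ Tl0);
  last by move=> w; rewrite addr_ge0.
rewrite (ge0_integralD_EFin _ (measurable_cst A) mQ (fun=> A0) Q0).
rewrite integral_cst_probability (ge0_integral_sum_EFin _ _ mQj Qj0).
rewrite (ge0_integral_sum_EFin _ _ mTli Tli0).
rewrite (eq_bigr _ (fun i _ => integral_tail_term i)) sumEFin sumr_const card_ord.
rewrite [in leRHS]big_split addrA -/A [in leRHS]EFinD (EFinD A).
apply: leeD; last by rewrite lee_fin mulr_natl.
apply: leeD => //.
by rewrite -sumEFin; apply: lee_sum => j _; apply: integral_quadratic_term.
Qed.

End ExpectedDelta.

Lemma sum_geometric_half (R : realFieldType) (a : R) J :
  \sum_(j < J) a / 2 ^+ j.+1 = a - a / 2 ^+ J.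
Proof.
elim: J => [|J IH]; first by rewrite big_ord0 expr0 divr1 subrr.
by rewrite big_ord_recr /= IH exprS; field; rewrite expf_neq0.
Qed.

(* With [c j = 2^(j+1) sqrt n] both error terms at scale [j] equal [2 sqrt n / 2^(j+1)]. *)
Lemma dyadic_weights_le (R : realFieldType) (n : nat) (r : R) : 1 <= r -> r * r = n%:R ->
  1 + \sum_(j < n) (2 * (2 ^+ j.+1 * r) / 4 ^+ j.+1 + 2 * n%:R / (2 ^+ j.+1 * r))
  + n%:R / 4 ^+ n <= 5 * r.
Proof.
move=> r1 rr.
have r0 : r != 0 by rewrite gt_eqF // (lt_le_trans ltr01).
have pow4 k : (4 : R) ^+ k = 2 ^+ k * 2 ^+ k by rewrite -exprMn -natrM.
rewrite (eq_bigr (fun j : 'I_n => 4 * r / 2 ^+ j.+1)) => [|j _]; last first.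
  by rewrite pow4 -rr; field; rewrite expf_neq0.
rewrite sum_geometric_half.
suff : n%:R / 4 ^+ n <= 4 * r / 2 ^+ n by lra.
have pow2_gt0 : (0 : R) < 2 ^+ n by apply: exprn_gt0.
rewrite pow4 ler_pdivrMr ?mulr_gt0 // mulrA divfK ?gt_eqF //.
have : n%:R <= 2 ^+ n :> R by rewrite -natrX ler_nat ltnW // ltn_expl.
have : r <= n%:R by rewrite -rr ler_peMr // (le_trans ler01).
nra.
Qed.

Theorem mainTheorem14 (R : realType) (d : measure_display) (T : measurableType d)
  (P : probability T R) (mu : probability R R) (n : nat)
  (X : 'I_n -> {RV P >-> R}) :
  (0 < n)%N ->
  mu [set x : R | x < 0] = 0%E ->
  (\int[mu]_x x%:E = 1)%E ->
  @iid R d T P mu n X ->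
  (\int[P]_w ((Delta (fun i => X i w))%:R)%:E <= (5 * Num.sqrt n%:R)%:E)%E.
Proof.
move=> n_gt0 neg0 mean1 iidX.
set r := Num.sqrt n%:R.
have rr : r * r = n%:R by rewrite -expr2 sqr_sqrtr.
have r1 : 1 <= r by rewrite -sqrtr1 ler_wsqrtr // ler1n.
have c_gt0 j : 0 < 2 ^+ j.+1 * r by rewrite mulr_gt0 ?exprn_gt0 // (lt_le_trans ltr01).
apply: le_trans (integral_Delta_le neg0 mean1 iidX n c_gt0) _.
by rewrite lee_fin dyadic_weights_le.
Qed.
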